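(* Let $(C,M)$ be a DGLA pair over $\mathbb{C}$ (with $M$ bounded above and each $H^j(M)$ finite-dimensional), let $(A,m)$ be an Artinian local $\mathbb{C}$-algebra of finite type, and let $\omega\in C^1\otimes_{\mathbb{C}}m$ satisfy $d\omega+\frac12[\omega,\omega]=0$. Then the complex $(M\otimes_{\mathbb{C}}A,\ d_\omega)$, where $d_\omega=d_M\otimes\mathrm{id}_A+\omega$ (with $\omega$ acting via the module multiplication), has finitely generated cohomology over $A$.
   Context: A DGLA over $\mathbb{C}$ is a graded vector space $C=\bigoplus_{i\ge0}C^i$ with a bilinear bracket $C^i\times C^j\to C^{i+j}$ that is graded skew-commutative and satisfies the graded Jacobi identity, and a differential $d$ of degree $1$ with $d^2=0$ satisfying $d[\alpha,\beta]=[d\alpha,\beta]+(-1)^{i}[\alpha,d\beta]$ for $\alpha\in C^i$. A module over $C$ is a graded vector space $M=\bigoplus_{i\ge0}M^i$ with bilinear maps $C^i\times M^j\to M^{i+j}$, $(\alpha,\xi)\mapsto\alpha\xi$, such that $[\alpha,\beta]\xi=\alpha(\beta\xi)-(-1)^{ij}\beta(\alpha\xi)$ for $\alpha\in C^i,\beta\in C^j$, and a differential $d_M$ of degree $1$, $d_M^2=0$, with $d_M(\alpha\xi)=(d\alpha)\xi+(-1)^i\alpha(d_M\xi)$ for $\alpha\in C^i$. A DGLA pair $(C,M)$ is a DGLA together with a module. $C\otimes A$ and $M\otimes A$ carry the $A$-linear extensions of these structures. The condition $d\omega+\frac12[\omega,\omega]=0$ implies $d_\omega^2=0$. *)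

(* Graded objects are nat-indexed families of K-vector
   spaces; tensor products with a finite-dimensional algebra A are realized
   in coordinates w.r.t. the library basis [vbasis fullv] of A. *)
From HB Require Import structures.
From mathcomp Require Import all_boot all_algebra.
From mathcomp Require Import vector falgebra.
From mathcomp Require Export reals complex.

Set Implicit Arguments.
Unset Strict Implicit.
Unset Printing Implicit Defensive.
Import GRing.Theory.
Local Open Scope ring_scope.

Definition gcast (T : nat -> Type) (m n : nat) (e : m = n) (x : T m) : T n :=
  eq_rect m T x n e.
Arguments gcast T {m n} e x.

Section DGLA.
Variable K : fieldType.

Definition sgn (i j : nat) : K := (-1) ^+ (i * j).

Record dgla := DGLA {
  dg_C : nat -> lmodType K;
  dg_br : forall i j, dg_C i -> dg_C j -> dg_C (i + j);
  dg_d : forall i, dg_C i -> dg_C i.+1;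
  dg_br_linl : forall i j (c : K) (a a' : dg_C i) (b : dg_C j),
    dg_br (c *: a + a') b = c *: dg_br a b + dg_br a' b;
  dg_br_linr : forall i j (c : K) (a : dg_C i) (b b' : dg_C j),
    dg_br a (c *: b + b') = c *: dg_br a b + dg_br a b';
  dg_br_skew : forall i j (a : dg_C i) (b : dg_C j),
    dg_br a b = - (sgn i j *: gcast dg_C (addnC j i) (dg_br b a));
  dg_br_jacobi : forall i j k (a : dg_C i) (b : dg_C j) (c : dg_C k),
    dg_br a (dg_br b c) =
      gcast dg_C (esym (addnA i j k)) (dg_br (dg_br a b) c)
      + sgn i j *: gcast dg_C (addnCA j i k) (dg_br b (dg_br a c));
  dg_d_lin : forall i (c : K) (a a' : dg_C i),
    dg_d (c *: a + a') = c *: dg_d a + dg_d a';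
  dg_dd : forall i (a : dg_C i), dg_d (dg_d a) = 0;
  dg_d_br : forall i j (a : dg_C i) (b : dg_C j),
    dg_d (dg_br a b) =
      gcast dg_C (addSn i j) (dg_br (dg_d a) b)
      + (-1) ^+ i *: gcast dg_C (addnS i j) (dg_br a (dg_d b))
}.

Record dgmod (L : dgla) := DGMod {
  md_M : nat -> lmodType K;
  md_act : forall i j, dg_C L i -> md_M j -> md_M (i + j);
  md_d : forall j, md_M j -> md_M j.+1;
  md_act_linl : forall i j (c : K) (a a' : dg_C L i) (x : md_M j),
    md_act (c *: a + a') x = c *: md_act a x + md_act a' x;
  md_act_linr : forall i j (c : K) (a : dg_C L i) (x x' : md_M j),
    md_act a (c *: x + x') = c *: md_act a x + md_act a x';
  md_act_br : forall i j k (a : dg_C L i) (b : dg_C L j) (x : md_M k),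
    md_act (dg_br a b) x =
      gcast md_M (addnA i j k) (md_act a (md_act b x))
      - sgn i j *: gcast md_M (etrans (addnCA j i k) (addnA i j k))
                     (md_act b (md_act a x));
  md_d_lin : forall j (c : K) (x x' : md_M j),
    md_d (c *: x + x') = c *: md_d x + md_d x';
  md_dd : forall j (x : md_M j), md_d (md_d x) = 0;
  md_d_act : forall i j (a : dg_C L i) (x : md_M j),
    md_d (md_act a x) =
      gcast md_M (addSn i j) (md_act (dg_d a) x)
      + (-1) ^+ i *: gcast md_M (addnS i j) (md_act a (md_d x))
}.

Definition is_cobound (X : nat -> zmodType) (D : forall n, X n -> X n.+1)
  (j : nat) (x : X j) : Prop :=
  match j return X j -> Prop with
  | 0 => fun x => x = 0
  | j'.+1 => fun x => exists y : X j', D j' y = x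
  end x.

Definition cohom_fg (S : Type) (X : nat -> zmodType)
  (D : forall n, X n -> X n.+1) (act : forall n, S -> X n -> X n) (j : nat) :=
  exists (r : nat) (z : 'I_r -> X j),
    (forall k, D j (z k) = 0) /\
    forall x : X j, D j x = 0 ->
      exists c : 'I_r -> S,
        is_cobound D (x - \sum_(k < r) act j (c k) (z k)).

Section Tensor.
Variable A : falgType K.

Definition dimA := \dim (fullv : {vspace A}).
Definition eA : dimA.-tuple A := vbasis (fullv : {vspace A}).

(* V (x)_K A, as families of coordinates along the basis eA of A *)
Definition tens (V : lmodType K) := {ffun 'I_dimA -> V}.

Definition tmul (V : lmodType K) (v : V) (a : A) : tens V :=
  [ffun k => coord eA k a *: v].

Definition tlin (V W : lmodType K) (f : V -> W) (x : tens V) : tens W :=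
  [ffun k => f (x k)].

(* A-bilinear extension of a K-bilinear map: b(v(x)a, w(x)a') = b(v,w)(x)aa' *)
Definition tbil (U V W : lmodType K) (b : U -> V -> W) (x : tens U)
  (y : tens V) : tens W :=
  [ffun k => \sum_(i < dimA) \sum_(l < dimA)
               coord eA k (tnth eA i * tnth eA l) *: b (x i) (y l)].

(* the A-module structure on V (x) A : a.(v (x) a') = v (x) (a a') *)
Definition tact (V : lmodType K) (a : A) (x : tens V) : tens V :=
  [ffun k => \sum_(i < dimA) coord eA k (a * tnth eA i) *: x i].

Definition in_tens_sub (V : lmodType K) (I : pred A) (x : tens V) : Prop :=
  exists (r : nat) (v : 'I_r -> V) (a : 'I_r -> A),
    (forall l, a l \in I) /\ x = \sum_(l < r) tmul (v l) (a l).

Definition is_ideal (I : pred A) : Prop :=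
  [/\ 0 \in I, (forall a b, a \in I -> b \in I -> a + b \in I)
    & (forall a b, b \in I -> a * b \in I)].

Definition maximal_ideal (I : pred A) : Prop :=
  [/\ is_ideal I, 1 \notin I &
     forall J : pred A, is_ideal J -> {subset I <= J} -> 1 \notin J -> J =i I].

Definition local_with_max (m : pred A) : Prop :=
  maximal_ideal m /\ forall J : pred A, maximal_ideal J -> J =i m.

Definition twisted_d (L : dgla) (Mo : dgmod L) (omega : tens (dg_C L 1))
  (j : nat) (x : tens (md_M Mo j)) : tens (md_M Mo j.+1) :=
  tlin (@md_d L Mo j) x
  + gcast (fun n => tens (md_M Mo n)) (add1n j) (tbil (@md_act L Mo 1 j) omega x).

End Tensor.
End DGLA.

From HB Require Import structures.
From mathcomp Require Import all_boot all_algebra.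
From mathcomp Require Import vector falgebra reals complex.
From mathcomp Require Import boolp ring zify.
Import GRing.Theory Num.Theory.
Local Open Scope ring_scope.
Set Implicit Arguments.
Unset Strict Implicit.
Unset Printing Implicit Defensive.

(* Let I be the ideal of A generated by the coefficients a_l of omega, which lie in m.
   As A is Artinian local, the a_l are nilpotent, hence I^P = 0 for some P, and
   F^p = M (x) I^p is a finite decreasing filtration of (M (x) A, d_omega) by subcomplexes.
   Since omega raises the filtration degree, d_omega induces d_M (x) 1 on
   F^p / F^(p+1) = M (x) (I^p / I^(p+1)), whose cohomology is finite-dimensional.
   Descending induction on p along H(F^(p+1)) -> H(F^p) -> H(F^p / F^(p+1)) shows that
   every H(F^p), in particular H(M (x) A), is finite-dimensional over C. *)

Lemma gcast_id (T : nat -> Type) n (e : n = n) (x : T n) : gcast T e x = x.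
Proof. by rewrite (eq_axiomK e). Qed.

Section LinearFun.
Variables (K : fieldType) (U V : lmodType K) (f : U -> V).
Hypothesis f_linear : linear f.
#[local] HB.instance Definition _ := GRing.isLinear.Build K U V _ f f_linear.

Lemma linear_fun0 : f 0 = 0. Proof. exact: linear0. Qed.

Lemma linear_funZ c u : f (c *: u) = c *: f u. Proof. exact: linearZ. Qed.

Lemma linear_funB u u' : f (u - u') = f u - f u'. Proof. exact: linearB. Qed.

Lemma linear_fun_sum I r (P : pred I) (F : I -> U) :
  f (\sum_(i <- r | P i) F i) = \sum_(i <- r | P i) f (F i).
Proof. exact: linear_sum. Qed.
End LinearFun.

Section Tensor.
Variables (K : fieldType) (A : falgType K).
Local Notation e := (eA A).

Lemma coord_eA (i k : 'I_(dimA A)) : coord e k (tnth e i) = (i == k)%:R.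
Proof. by rewrite (tnth_nth 0); apply/coord_free/basis_free/vbasisP. Qed.

Lemma expand_eA (a : A) : a = \sum_i coord e i a *: tnth e i.
Proof.
by rewrite {1}(coord_vbasis (memvf a)); apply: eq_bigr => i _; rewrite (tnth_nth 0).
Qed.

Section Module.
Variable V : lmodType K.

Lemma tmul_is_linear (v : V) : linear (@tmul K A V v).
Proof. by move=> c a a'; apply/ffunP => k; rewrite !ffunE linearP scalerDl scalerA. Qed.
HB.instance Definition _ v :=
  GRing.isLinear.Build K A (tens A V) _ (@tmul K A V v) (tmul_is_linear v).

Lemma tmulDl (v v' : V) (a : A) : tmul (v + v') a = tmul v a + tmul v' a.
Proof. by apply/ffunP => k; rewrite !ffunE scalerDr. Qed.

Lemma tmulZl c (v : V) (a : A) : tmul (c *: v) a = c *: tmul v a.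
Proof. by apply/ffunP => k; rewrite !ffunE !scalerA mulrC. Qed.

Lemma tmul0l (a : A) : tmul (0 : V) a = 0.
Proof. by apply/ffunP => k; rewrite !ffunE scaler0. Qed.

Lemma tmulNl (v : V) (a : A) : tmul (- v) a = - tmul v a.
Proof. by apply/ffunP => k; rewrite !ffunE scalerN. Qed.

Lemma tmul_suml I r (P : pred I) (F : I -> V) (a : A) :
  tmul (\sum_(i <- r | P i) F i) a = \sum_(i <- r | P i) tmul (F i) a.
Proof. exact: (big_morph (fun v => tmul v a) (fun v v' => tmulDl v v' a) (tmul0l a)). Qed.

Lemma tens_expand (x : tens A V) : x = \sum_i tmul (x i) (tnth e i).
Proof.
apply/ffunP => k; rewrite sum_ffunE (bigD1 k) //= big1 => [|i /negPf ik].
  by rewrite ffunE coord_eA eqxx scale1r addr0.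
by rewrite ffunE coord_eA ik scale0r.
Qed.

Lemma tact_scalar c (x : tens A V) : tact (c%:A : A) x = c *: x.
Proof.
apply/ffunP => k; rewrite !ffunE (bigD1 k) //= big1 => [|i /negPf ik].
  by rewrite mulr_algl linearZ /= coord_eA eqxx mulr1 addr0.
by rewrite mulr_algl linearZ /= coord_eA ik mulr0 scale0r.
Qed.

Section Contraction.
Variable phi : {scalar A}.

(* id_V (x) phi : V (x) A -> V *)
Definition tcontract (x : tens A V) : V := \sum_k phi (tnth e k) *: x k.

Lemma tcontract_is_linear : linear tcontract.
Proof.
move=> c x y; rewrite /tcontract scaler_sumr -big_split; apply: eq_bigr => k _.
by rewrite !ffunE scalerDr !scalerA mulrC.
Qed.
HB.instance Definition _ :=
  GRing.isLinear.Build K (tens A V) V _ tcontract tcontract_is_linear.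

Lemma tcontract_tmul (v : V) (a : A) : tcontract (tmul v a) = phi a *: v.
Proof.
rewrite /tcontract; under eq_bigr => k _ do rewrite ffunE scalerA.
rewrite -scaler_suml {2}(expand_eA a) linear_sum; congr (_ *: v).
by apply: eq_bigr => i _; rewrite linearZ mulrC.
Qed.
End Contraction.

End Module.

Section LinearExtension.
Variables (V W : lmodType K) (f : {linear V -> W}).

Lemma tlin_is_linear : linear (tlin f : tens A V -> tens A W).
Proof. by move=> c x y; apply/ffunP => k; rewrite !ffunE linearP. Qed.
HB.instance Definition _ :=
  GRing.isLinear.Build K (tens A V) (tens A W) _ (tlin f) tlin_is_linear.

Lemma tlin_tmul (v : V) (a : A) : tlin f (tmul v a) = tmul (f v) a.
Proof. by apply/ffunP => k; rewrite !ffunE linearZ. Qed.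

Lemma tlin_expand (x : tens A V) : tlin f x = \sum_i tmul (f (x i)) (tnth e i).
Proof.
by rewrite {1}(tens_expand x) linear_sum /=; apply: eq_bigr => i _; rewrite tlin_tmul.
Qed.

Lemma tcontract_tlin (phi : {scalar A}) (x : tens A V) :
  tcontract phi (tlin f x) = f (tcontract phi x).
Proof. by rewrite /tcontract linear_sum; apply: eq_bigr => k _; rewrite ffunE linearZ. Qed.
End LinearExtension.

Section Bilinear.
Variables (U V W : lmodType K) (b : U -> V -> W).
Hypothesis b_linl : forall c u u' v, b (c *: u + u') v = c *: b u v + b u' v.
Hypothesis b_linr : forall c u v v', b u (c *: v + v') = c *: b u v + b u v'.

Let b_linearl v : linear (b^~ v). Proof. by move=> c u u'; rewrite b_linl. Qed.
Let b_linearr u : linear (b u). Proof. by move=> c v v'; rewrite b_linr. Qed.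
Let bZl c u v : b (c *: u) v = c *: b u v. Proof. exact: linear_funZ (b_linearl v) c u. Qed.
Let bZr c u v : b u (c *: v) = c *: b u v. Proof. exact: linear_funZ (b_linearr u) c v. Qed.

Lemma tbil_tmul u (a : A) v (a' : A) :
  tbil b (tmul u a) (tmul v a') = tmul (b u v) (a * a').
Proof.
apply/ffunP => k; rewrite !ffunE.
under eq_bigr do under eq_bigr => ? _ do rewrite !ffunE bZl bZr !scalerA.
under eq_bigr => ? _ do rewrite -scaler_suml.
rewrite -scaler_suml; congr (_ *: _).
rewrite {2}(expand_eA a) {2}(expand_eA a') mulr_suml linear_sum; apply: eq_bigr => i _.
rewrite mulr_sumr linear_sum; apply: eq_bigr => l _.
rewrite -scalerAl -scalerAr !linearZ /=; ring.
Qed.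

Lemma tbil_linearl (y : tens A V) : linear (tbil b ^~ y).
Proof.
move=> c x x'; apply/ffunP => k; rewrite !ffunE scaler_sumr -big_split.
apply: eq_bigr => i _; rewrite scaler_sumr -big_split; apply: eq_bigr => l _.
by rewrite !ffunE b_linl scalerDr !scalerA mulrC.
Qed.

Lemma tbil_linearr (x : tens A U) : linear (tbil b x).
Proof.
move=> c y y'; apply/ffunP => k; rewrite !ffunE scaler_sumr -big_split.
apply: eq_bigr => i _; rewrite scaler_sumr -big_split; apply: eq_bigr => l _.
by rewrite !ffunE b_linr scalerDr !scalerA mulrC.
Qed.

Lemma tbil_suml I r (P : pred I) (F : I -> tens A U) (y : tens A V) :
  tbil b (\sum_(i <- r | P i) F i) y = \sum_(i <- r | P i) tbil b (F i) y.
Proof. exact: (linear_fun_sum (tbil_linearl y) r P F). Qed.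

Lemma tbil_sumr I r (P : pred I) (F : I -> tens A V) (x : tens A U) :
  tbil b x (\sum_(i <- r | P i) F i) = \sum_(i <- r | P i) tbil b x (F i).
Proof. exact: (linear_fun_sum (tbil_linearr x) r P F). Qed.

Lemma tbil_expand (x : tens A U) (y : tens A V) :
  tbil b x y = \sum_i \sum_l tmul (b (x i) (y l)) (tnth e i * tnth e l).
Proof.
rewrite {1}(tens_expand x) tbil_suml; apply: eq_bigr => i _.
by rewrite {1}(tens_expand y) tbil_sumr; apply: eq_bigr => l _; rewrite tbil_tmul.
Qed.
End Bilinear.
End Tensor.

Section TwistedDifferential.
Variables (K : fieldType) (L : dgla K) (Mo : dgmod L) (A : falgType K).
Variable omega : tens A (dg_C L 1).
Local Notation M := (md_M Mo).
Local Notation e := (eA A).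
Local Notation D := (twisted_d omega).

Lemma md_d_is_linear j : linear (@md_d _ L Mo j).
Proof. by move=> c x y; rewrite md_d_lin. Qed.
HB.instance Definition _ j :=
  GRing.isLinear.Build K (M j) (M j.+1) _ (@md_d _ L Mo j) (@md_d_is_linear j).


Lemma dg_d_is_linear i : linear (@dg_d _ L i).
Proof. by move=> c x y; rewrite dg_d_lin. Qed.
HB.instance Definition _ i :=
  GRing.isLinear.Build K (dg_C L i) (dg_C L i.+1) _ (@dg_d _ L i) (@dg_d_is_linear i).

Lemma twisted_dE j (x : tens A (M j)) :
  D x = tlin (@md_d _ L Mo j) x + tbil (@md_act _ L Mo 1 j) omega x.
Proof. by rewrite /twisted_d gcast_id. Qed.

Lemma twisted_d_is_linear j : linear (@twisted_d _ A L Mo omega j).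
Proof.
move=> c x y; rewrite !twisted_dE linearP (tbil_linearr (@md_act_linr _ L Mo 1 j)).
by rewrite scalerDr addrACA.
Qed.
HB.instance Definition _ j := GRing.isLinear.Build K (tens A (M j)) (tens A (M j.+1)) _
  (@twisted_d _ A L Mo omega j) (@twisted_d_is_linear j).

Lemma tbil_act_tmul i j u (a : A) v (a' : A) :
  tbil (@md_act _ L Mo i j) (tmul u a) (tmul v a') = tmul (md_act u v) (a * a').
Proof. exact: (tbil_tmul (@md_act_linl _ L Mo i j) (@md_act_linr _ L Mo i j)). Qed.

Lemma twisted_d_tmul r (w : 'I_r -> dg_C L 1) (a : 'I_r -> A) :
  omega = \sum_l tmul (w l) (a l) -> forall j (v : M j) (b : A),
  D (tmul v b) = tmul (md_d v) b + \sum_l tmul (md_act (w l) v) (a l * b).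
Proof.
move=> om j v b; rewrite twisted_dE tlin_tmul om (tbil_suml (@md_act_linl _ L Mo 1 j)).
by congr (_ + _); apply: eq_bigr => l _; rewrite tbil_act_tmul.
Qed.
End TwistedDifferential.

Section Curvature.
Variables (K : fieldType) (L : dgla K) (Mo : dgmod L) (A : falgType K).
Hypothesis mulAC : forall a b : A, a * b = b * a.
Hypothesis two_neq0 : (2%:R : K) != 0.
Variable omega : tens A (dg_C L 1).
Local Notation M := (md_M Mo).
Local Notation e := (eA A).
Local Notation D := (twisted_d omega).
Local Notation curvature :=
  (tlin (@dg_d _ L 1) omega + 2%:R^-1 *: tbil (@dg_br _ L 1 1) omega omega).

Lemma twisted_d2_tmulE j (v : M j) (a : A) :
  D (D (tmul v a)) = \sum_l tmul (md_act (dg_d (omega l)) v) (tnth e l * a)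
    + \sum_i \sum_l tmul (md_act (omega l) (md_act (omega i) v)) (tnth e l * (tnth e i * a)).
Proof.
have DE := twisted_d_tmul (Mo := Mo) (tens_expand omega).
rewrite DE linearD /= DE linear_sum /= md_dd tmul0l add0r.
under [X in _ + X = _]eq_bigr => l _ do
  rewrite DE (@md_d_act _ L Mo 1 j) !gcast_id expr1 scaleN1r tmulDl tmulNl.
by rewrite !big_split /= sumrN addrCA addrA subrK.
Qed.

Lemma curvature_act_tmulE j (v : M j) (a : A) :
  tbil (@md_act _ L Mo 2 j) curvature (tmul v a) =
    \sum_l tmul (md_act (dg_d (omega l)) v) (tnth e l * a)
    + \sum_i \sum_l tmul (md_act (omega l) (md_act (omega i) v)) (tnth e l * (tnth e i * a)).
Proof.
have act2_linl := @md_act_linl _ L Mo 2 j.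
rewrite [tlin _ _ + _]addrC (tbil_linearl act2_linl) tlin_expand.
rewrite (tbil_expand (@dg_br_linl _ L 1 1) (@dg_br_linr _ L 1 1)) !(tbil_suml act2_linl) addrC.
congr (_ + _); first by apply: eq_bigr => l _; rewrite tbil_act_tmul.
set S := (RHS).
have brE i l : tbil (@md_act _ L Mo 2 j)
    (tmul (dg_br (omega i) (omega l)) (tnth e i * tnth e l)) (tmul v a) =
  tmul (md_act (omega i) (md_act (omega l) v)) (tnth e i * tnth e l * a)
  + tmul (md_act (omega l) (md_act (omega i) v)) (tnth e i * tnth e l * a).
  rewrite tbil_act_tmul (@md_act_br _ L Mo 1 1 j) !gcast_id.
  by rewrite /sgn expr1 scaleN1r opprK tmulDl.
under eq_bigr => i _ do
  rewrite (tbil_suml act2_linl) (eq_bigr _ (fun l _ => brE i l)) big_split.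
rewrite big_split /= [X in _ *: (X + _)]exchange_big /=.
have -> : \sum_l \sum_i
    tmul (md_act (omega i) (md_act (omega l) v)) (tnth e i * tnth e l * a) = S.
  by apply: eq_bigr => l _; apply: eq_bigr => i _; rewrite mulrA.
have -> : \sum_i \sum_l
    tmul (md_act (omega l) (md_act (omega i) v)) (tnth e i * tnth e l * a) = S.
  by apply: eq_bigr => i _; apply: eq_bigr => l _; rewrite (mulAC (tnth e i)) mulrA.
by rewrite -mulr2n -scaler_nat scalerA mulVf // scale1r.
Qed.

Lemma twisted_d2_tmul j (v : M j) (a : A) :
  D (D (tmul v a)) = tbil (@md_act _ L Mo 2 j) curvature (tmul v a).
Proof. by rewrite twisted_d2_tmulE curvature_act_tmulE. Qed.

Lemma twisted_dK : curvature = 0 -> forall j (x : tens A (M j)), D (D x) = 0.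
Proof.
move=> MC j x; rewrite (tens_expand x) !linear_sum big1 // => i _ /=.
by rewrite twisted_d2_tmul MC (linear_fun0 (tbil_linearl (@md_act_linl _ L Mo 2 j) _)).
Qed.
End Curvature.

Section FiniteSpan.
Variables (K : fieldType) (V : lmodType K).

Fixpoint in_span (zs : seq V) (x : V) : Prop :=
  if zs is z :: zs' then exists c, in_span zs' (x - c *: z) else x = 0.

Definition is_subspace (P : V -> Prop) :=
  P 0 /\ forall c x y, P x -> P y -> P (c *: x + y).

Section Subspace.
Variables (P : V -> Prop) (subP : is_subspace P).

Lemma subspace0 : P 0. Proof. by case: subP. Qed.

Lemma subspaceP c x y : P x -> P y -> P (c *: x + y).
Proof. by case: subP => _; apply. Qed.

Lemma subspaceD x y : P x -> P y -> P (x + y).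
Proof. by move=> Px Py; have := subspaceP 1 Px Py; rewrite scale1r. Qed.

Lemma subspaceZ c x : P x -> P (c *: x).
Proof. by move=> Px; have := subspaceP c Px subspace0; rewrite addr0. Qed.

Lemma subspaceB x y : P x -> P y -> P (x - y).
Proof. by move=> Px Py; rewrite -scaleN1r; apply/subspaceD/subspaceZ. Qed.

Lemma subspace_sum I r (Q : pred I) (F : I -> V) :
  (forall i, Q i -> P (F i)) -> P (\sum_(i <- r | Q i) F i).
Proof. by apply: big_ind; [apply: subspace0 | apply: subspaceD]. Qed.
End Subspace.

Lemma in_span_subspace zs : is_subspace (in_span zs).
Proof.
elim: zs => [|z zs [IH0 IHP]] /=; first by split=> // c x y -> ->; rewrite scaler0 addr0.
split; first by exists 0; rewrite scale0r subr0.
move=> c x y [a Hx] [b Hy]; exists (c * a + b).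
by have := IHP c _ _ Hx Hy; rewrite scalerBr scalerA scalerDl opprD addrACA.
Qed.

Lemma in_span_catl zs ws x : in_span zs x -> in_span (zs ++ ws) x.
Proof.
elim: zs x => [x /= ->|z zs IH x [c Hx]]; last by exists c; apply: IH.
exact: subspace0 (in_span_subspace _).
Qed.

Lemma in_span_catr zs ws x : in_span ws x -> in_span (zs ++ ws) x.
Proof. by elim: zs => //= z zs IH Hx; exists 0; rewrite scale0r subr0; apply: IH. Qed.

Lemma in_span_mem zs z : z \in zs -> in_span zs z.
Proof.
elim: zs => //= y zs IH; rewrite inE => /predU1P [->|/IH zs_z].
  by exists 1; rewrite scale1r subrr; apply: subspace0 (in_span_subspace _).
by exists 0; rewrite scale0r subr0.
Qed.

Lemma in_spanP zs x :
  in_span zs x -> exists c : 'I_(size zs) -> K, x = \sum_(k < size zs) c k *: zs`_k.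
Proof.
elim: zs x => [x /= ->|z zs IH x [c0 /IH [c ec]]].
  by exists (fun _ => 0); rewrite big_ord0.
exists (fun k : 'I_(size zs).+1 => if unlift ord0 k is Some i then c i else c0).
rewrite big_ord_recl /= unlift_none -[x](subrK (c0 *: z)) ec addrC; congr (_ + _).
by apply: eq_bigr => i _; rewrite liftK.
Qed.

(* Induction on zs = z :: zs': either T lies in span zs', or some t0 in T outside span zs'
   absorbs the z-component of every element of T. *)
Lemma subspace_in_span_finite zs (T : V -> Prop) :
  is_subspace T -> (forall t, T t -> in_span zs t) ->
  exists ts, {in ts, forall t, T t} /\ forall t, T t -> in_span ts t.
Proof.
elim: zs T => [|z zs IH] T subT spanT.
  by exists [::]; split.
pose T' t := T t /\ in_span zs t.
have subT' : is_subspace T'.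
  split; first by split; [apply: subspace0 | apply: subspace0 (in_span_subspace _)].
  move=> c x y [Tx Sx] [Ty Sy].
  by split; [apply: (subspaceP subT) | apply: (subspaceP (in_span_subspace _))].
have [ts' [T'ts' spants']] := IH T' subT' (fun t => @proj2 _ _).
have T'T t : T' t -> T t by case.
case: (pselect (exists t0, T t0 /\ ~ in_span zs t0)) => [[t0 [Tt0 nSt0]]|nex].
  have [c0 Sc0] := spanT _ Tt0.
  have c0_neq0 : c0 != 0.
    by apply: contra_notN nSt0 => /eqP c00; rewrite c00 scale0r subr0 in Sc0.
  exists (t0 :: ts'); split => [t|t Tt].
    by rewrite inE => /predU1P [->|/T'ts'/T'T].
  have [c Sc] := spanT _ Tt; exists (c / c0); apply: spants'; split.
    by apply: subspaceB => //; apply: subspaceZ.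
  have -> : t - (c / c0) *: t0 = (t - c *: z) - (c / c0) *: (t0 - c0 *: z).
    by rewrite scalerBr scalerA mulfVK // opprB addrA subrK.
  by apply: (subspaceB (in_span_subspace zs)) Sc (subspaceZ (in_span_subspace zs) _ Sc0).
exists ts'; split => [t /T'ts'/T'T //|t Tt]; apply: spants'; split => //.
by apply: contrapT => nSt; apply: nex; exists t.
Qed.

Lemma span_lift (Q : V -> Prop) (R : V -> V -> Prop) ts :
  R 0 0 -> (forall c t x t' x', R t x -> R t' x' -> R (c *: t + t') (c *: x + x')) ->
  (forall t x, R t x -> Q x) -> {in ts, forall t, exists x, R t x} ->
  exists xs, {in xs, forall x, Q x} /\
    forall t, in_span ts t -> exists x, in_span xs x /\ R t x.
Proof.
move=> R00 RP RQ; elim: ts => [_|t0 ts IH liftts].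
  by exists [::]; split=> // t /= ->; exists 0.
have [x0 Rx0] := liftts t0 (mem_head _ _).
have [xs [Qxs spanxs]] := IH (fun t tts => liftts t (mem_behead (s := t0 :: ts) tts)).
exists (x0 :: xs); split => [x|t [c Sc]].
  by rewrite inE => /predU1P [->|/Qxs]; [apply: RQ Rx0|].
have [x' [Sx' Rx']] := spanxs _ Sc.
exists (c *: x0 + x'); split; first by exists c; rewrite addrAC subrr add0r.
by have := RP c _ _ _ _ Rx0 Rx'; rewrite addrC subrK.
Qed.
End FiniteSpan.

Section FilteredComplex.
Variables (K : fieldType) (X : nat -> lmodType K) (D : forall n, X n -> X n.+1).
Hypothesis D_linear : forall n, linear (@D n).
Let D0 n : D (0 : X n) = 0. Proof. exact: linear_fun0 (@D_linear n). Qed.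
Hypothesis DK : forall n (x : X n), D (D x) = 0.

Variable F : nat -> forall n, X n -> Prop.
Arguments F : clear implicits.
Hypothesis F_subspace : forall p n, is_subspace (F p n).
Hypothesis F_decr : forall p n x, F p.+1 n x -> F p n x.
Variable P : nat.
Hypothesis F_last : forall n x, F P n x -> x = 0.

Definition filt_cobound p j : X j -> Prop :=
  match j with
  | 0 => fun y => y = 0
  | j'.+1 => fun y => exists w, F p j' w /\ D w = y
  end.
Arguments filt_cobound : clear implicits.

Lemma filt_cobound_subspace p j : is_subspace (filt_cobound p j).
Proof.
case: j => [|j] /=; first by split=> // c x y -> ->; rewrite scaler0 addr0.
split; first by exists 0; rewrite D0; split=> //; apply: subspace0.
move=> c _ _ [w [Fw <-]] [w' [Fw' <-]].
by exists (c *: w + w'); rewrite D_linear; split=> //; apply: subspaceP.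
Qed.

Lemma filt_cobound_cobound p j y : filt_cobound p j y -> is_cobound D y.
Proof. by case: j y => [|j] y //= [w [_ <-]]; exists w. Qed.

Lemma filt_cobound_decr p j y : filt_cobound p.+1 j y -> filt_cobound p j y.
Proof. by case: j y => [|j] y //= [w [Fw <-]]; exists w; split=> //; apply: F_decr. Qed.

Lemma filt_coboundK p j y : filt_cobound p j y -> D y = 0.
Proof. by case: j y => [|j] y /= => [->|[w [_ <-]]]; [apply: D0 | apply: DK]. Qed.

(* H(F p / F p.+1) is finitely generated, stated without quotients: every cocycle of
   F p / F p.+1 lies in span zs up to F p.+1 and a coboundary from F p. *)
Hypothesis gr_cohom_fg : forall p j, (p < P)%N -> exists zs : seq (X j),
  forall x, F p j x -> F p.+1 j.+1 (D x) ->
  exists t y, [/\ in_span zs t, filt_cobound p j y & F p.+1 j (x - t - y)].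

Definition filt_cohom_fg p := forall j, exists xs,
  {in xs, forall z, F p j z /\ D z = 0} /\
  forall x, F p j x -> D x = 0 -> exists t, in_span xs t /\ filt_cobound p j (x - t).

Lemma filt_cohom_fg_last : filt_cohom_fg P.
Proof.
move=> j; exists [::]; split=> // x /F_last -> _; exists 0; rewrite subr0.
by split=> //; apply: subspace0 (filt_cobound_subspace P j).
Qed.

(* x is an F p-cocycle lifting the graded class t *)
Definition filt_lift p j (t x : X j) :=
  [/\ F p j x, D x = 0 & exists y, filt_cobound p j y /\ F p.+1 j (x - t - y)].
Arguments filt_lift : clear implicits.

Lemma filt_lift0 p j : filt_lift p j 0 0.
Proof.
split; [exact: subspace0 | exact: D0 |].
by exists 0; rewrite !subr0; split; apply: subspace0 => //; apply: filt_cobound_subspace.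
Qed.

Lemma filt_liftP p j c t x t' x' : filt_lift p j t x -> filt_lift p j t' x' ->
  filt_lift p j (c *: t + t') (c *: x + x').
Proof.
move=> [Fx Dx [y [By Fy]]] [Fx' Dx' [y' [By' Fy']]]; split.
- exact: subspaceP.
- by rewrite D_linear Dx Dx' scaler0 addr0.
exists (c *: y + y'); split; first exact: subspaceP (filt_cobound_subspace p j) _ _ _ By By'.
suff -> : c *: x + x' - (c *: t + t') - (c *: y + y') = c *: (x - t - y) + (x' - t' - y').
  exact: subspaceP.
by rewrite !scalerBr addrACA [c *: x - _ + _]addrACA -!opprD.
Qed.

(* The graded classes that lift to F p-cocycles form a subspace of the finite span of the
   graded generators, hence are spanned by finitely many of them; lift those. *)
Lemma filt_cocycle_approx p j : (p < P)%N -> exists xs : seq (X j),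
  {in xs, forall z, F p j z /\ D z = 0} /\
  forall x, F p j x -> D x = 0 -> exists x1 y,
    [/\ in_span xs x1, D x1 = 0, filt_cobound p j y & F p.+1 j (x - x1 - y)].
Proof.
move=> ltpP; have [zs grzs] := gr_cohom_fg j ltpP.
pose T t := in_span zs t /\ exists x, filt_lift p j t x.
have subT : is_subspace T.
  split; first by split; [apply: subspace0 (in_span_subspace _) | exists 0; apply: filt_lift0].
  move=> c t t' [St [x Rx]] [St' [x' Rx']]; split.
    exact: subspaceP (in_span_subspace _) _ _ _ St St'.
  by exists (c *: x + x'); apply: filt_liftP.
have [ts [Tts spants]] := subspace_in_span_finite subT (fun t => @proj1 _ _).
have [xs [cocyc lift]] := span_lift (Q := fun z => F p j z /\ D z = 0)
  (filt_lift0 p j) (@filt_liftP p j) (fun t x '(And3 Fx Dx _) => conj Fx Dx)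
  (fun t tts => proj2 (Tts t tts)).
exists xs; split=> // x Fx Dx.
have FDx : F p.+1 j.+1 (D x) by rewrite Dx; apply: subspace0.
have [t [y [St By Fxty]]] := grzs x Fx FDx.
have Tt : T t by split=> //; exists x; split=> //; exists y.
have [x1 [Sx1 [Fx1 Dx1 [y1 [By1 Fx1ty1]]]]] := lift t (spants t Tt).
exists x1, (y - y1); split=> //; first exact: subspaceB (filt_cobound_subspace p j) _ _ By By1.
suff <- : (x - t - y) - (x1 - t - y1) = x - x1 - (y - y1) by apply: subspaceB.
rewrite [x - t - y]addrAC [x1 - t - y1]addrAC [x1 - y1 - t]addrC addrKA.
by rewrite opprD addrACA -opprD.
Qed.

Lemma filt_cohom_fg_step p : (p < P)%N -> filt_cohom_fg p.+1 -> filt_cohom_fg p.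
Proof.
move=> ltpP fgp1 j; have [xs1 [cocyc1 approx1]] := filt_cocycle_approx j ltpP.
have [xs2 [cocyc2 fg2]] := fgp1 j.
exists (xs1 ++ xs2); split=> [z|x Fx Dx].
  by rewrite mem_cat => /orP [/cocyc1 //|/cocyc2 [Fz Dz]]; split=> //; apply: F_decr.
have [x1 [y [Sx1 Dx1 By Fu]]] := approx1 x Fx Dx.
have Du : D (x - x1 - y) = 0.
  by rewrite !(linear_funB (@D_linear _)) Dx Dx1 (filt_coboundK By) !subrr.
have [t2 [St2 Bu]] := fg2 _ Fu Du.
exists (x1 + t2); split.
  by apply: (subspaceD (in_span_subspace _)); [apply: in_span_catl | apply: in_span_catr].
have -> : x - (x1 + t2) = (x - x1 - y - t2) + y by rewrite addrAC subrK opprD addrA.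
by apply: (subspaceD (filt_cobound_subspace _ _)) By; apply: filt_cobound_decr.
Qed.

Lemma filt_cohom_fg0 : filt_cohom_fg 0.
Proof.
suff fgP k p : (p + k)%N = P -> filt_cohom_fg p by exact: (fgP P).
elim: k p => [p|k IH p pkP]; first by rewrite addn0 => ->; apply: filt_cohom_fg_last.
apply: filt_cohom_fg_step; first by rewrite -pkP addnS ltnS leq_addr.
by apply: IH; rewrite addSnnS.
Qed.
End FilteredComplex.

Section LocalAlgebra.
Variables (K : fieldType) (A : falgType K).
Hypothesis mulAC : forall a b : A, a * b = b * a.
Variable m : pred A.
Hypothesis m_local : local_with_max m.

Definition is_vs_ideal (U : {vspace A}) := forall a x, x \in U -> a * x \in U.

Lemma memv_amull (b x : A) : reflect (exists c, x = b * c) (x \in (amull b @: fullv)%VS).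
Proof.
apply: (iffP memv_imgP) => [[c _ ->]|[c ->]]; first by exists c; rewrite lfunE.
by exists c; rewrite ?memvf // lfunE.
Qed.

Lemma vs_ideal_amull (b : A) : is_vs_ideal (amull b @: fullv)%VS.
Proof.
by move=> a _ /memv_amull [c ->]; apply/memv_amull; exists (a * c); rewrite mulrA (mulAC a) -mulrA.
Qed.

Definition proper_ideal_with (b : A) (U : {vspace A}) :=
  [/\ is_vs_ideal U, 1 \notin U & b \in U].

Lemma proper_ideal_with_maxdim b U0 : proper_ideal_with b U0 ->
  exists2 U, proper_ideal_with b U &
    forall U', proper_ideal_with b U' -> (\dim U' <= \dim U)%N.
Proof.
move=> PU0; pose Pdim n := `[< exists U, proper_ideal_with b U /\ \dim U = n >].
have exP : exists n, Pdim n by exists (\dim U0); apply/asboolP; exists U0.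
have ubP n : Pdim n -> (n <= dimA A)%N by move=> /asboolP [U [_ <-]]; apply/dimvS/subvf.
case: (ex_maxnP exP ubP) => n /asboolP [U [PU <-]] maxU.
by exists U => // U' PU'; apply: maxU; apply/asboolP; exists U'.
Qed.

(* A proper ideal J containing U also contains the proper ideal U + xA for each x in J. *)
Lemma maxdim_proper_ideal_maximal b U : proper_ideal_with b U ->
  (forall U', proper_ideal_with b U' -> (\dim U' <= \dim U)%N) ->
  maximal_ideal (fun x => x \in U).
Proof.
move=> [idU U1 Ub] maxU; split=> //.
  by split=> [|x y|x y]; [apply: mem0v | apply: memvD | apply: idU].
move=> J [_ JD JM] UJ J1 x; apply/idP/idP => [Jx|]; last exact: UJ.
pose U' := (U + amull x @: fullv)%VS.
have idU' : is_vs_ideal U'.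
  move=> a _ /memv_addP [u Uu [v /memv_amull [c ->] ->]].
  by rewrite mulrDr memv_add ?idU //; apply: vs_ideal_amull; apply/memv_amull; exists c.
have U'J y : y \in U' -> y \in J.
  move=> /memv_addP [u Uu [v /memv_amull [c ->] ->]].
  by apply: JD; [apply: UJ | rewrite mulAC; apply: JM].
have PU' : proper_ideal_with b U'.
  by split=> //; [apply: contraNN J1 => /U'J | exact: subvP (addvSl _ _) _ Ub].
have /eqP -> : U == U' by rewrite eqEdim addvSl maxU.
by rewrite -[x]add0r memv_add ?mem0v //; apply/memv_amull; exists 1; rewrite mulr1.
Qed.

Lemma nonunit_mem_maxideal b : ~ (exists c, b * c = 1) -> b \in m.
Proof.
move=> nub; have PbA : proper_ideal_with b (amull b @: fullv)%VS.
  split; first exact: vs_ideal_amull.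
    by apply/memv_amull => -[c c1]; apply: nub; exists c.
  by apply/memv_amull; exists 1; rewrite mulr1.
have [U PU maxU] := proper_ideal_with_maxdim PbA.
have [_ /(_ _ (maxdim_proper_ideal_maximal PU maxU)) Um] := m_local.
by rewrite -Um; case: PU.
Qed.

Lemma notin_maxideal_unit b : b \notin m -> exists c, b * c = 1.
Proof. by move=> bm; apply: contrapT => nub; move/negP: bm; apply; apply: nonunit_mem_maxideal. Qed.

(* The chain a^n A stabilises, say a^n = a^(n+1) c; as 1 - a c is a unit, a^n = 0. *)
Lemma maxideal_nilpotent a : a \in m -> exists n, a ^+ n = 0.
Proof.
move=> am; have [[[_ mD mM] m1 _] _] := m_local.
pose V n := (amull (a ^+ n) @: fullv)%VS.
have VS n : (V n.+1 <= V n)%VS.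
  apply/subvP => _ /memv_amull [c ->]; apply/memv_amull.
  by exists (a * c); rewrite exprS (mulAC a) mulrA.
pose Pdim k := `[< exists n, \dim (V n) = k >].
have [k /asboolP [n dimn] mink] : {k | Pdim k & forall k', Pdim k' -> (k <= k')%N}.
  by apply: find_ex_minn; exists (\dim (V 0%N)); apply/asboolP; exists 0%N.
have /eqP eVn : V n.+1 == V n by rewrite eqEdim VS dimn mink //; apply/asboolP; exists n.+1.
have /memv_amull [c anc] : a ^+ n \in V n.+1.
  by rewrite eVn; apply/memv_amull; exists 1; rewrite mulr1.
have [u acu] : exists u, (1 - a * c) * u = 1.
  apply: notin_maxideal_unit; apply: contraNN m1 => acm.
  by rewrite -(subrK (a * c) 1) mD // mulAC mM.
by exists n; rewrite -[a ^+ n]mulr1 -acu mulrA mulrBr mulr1 mulrA -exprSr -anc subrr mul0r.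
Qed.

Lemma maxideal_nilpotent_common r (a : 'I_r -> A) :
  (forall l, a l \in m) -> exists q, forall l, a l ^+ q = 0.
Proof.
move=> am; have [n an] := fin_all_exists (fun l => maxideal_nilpotent (am l)).
by exists (\max_l n l)%N => l; rewrite -(subnKC (leq_bigmax l)) exprD an mul0r.
Qed.
End LocalAlgebra.

Lemma size_count_mem (T : finType) (s : seq T) : size s = (\sum_(x : T) count_mem x s)%N.
Proof.
elim: s => [|y s IH]; first by rewrite big1.
rewrite /= big_split /= -IH (bigD1 y) //= eqxx big1 ?add1n ?addn0 // => x /negPf.
by rewrite eq_sym => ->.
Qed.

Lemma count_mem_pigeonhole (T : finType) (s : seq T) q :
  (#|T| * q < size s)%N -> exists x, (q <= count_mem x s)%N.
Proof.
move=> lts; apply: contrapT => /forallNP small.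
have : (\sum_(x : T) (count_mem x s + 1) <= \sum_(x : T) q)%N.
  by apply: leq_sum => x _; rewrite addn1 ltnNge; apply/negP/small.
by move: lts; rewrite big_split /= -size_count_mem !sum_nat_const muln1 !cardT; lia.
Qed.

Section MonomialIdeal.
Variables (K : fieldType) (A : falgType K).
Hypothesis mulAC : forall a b : A, a * b = b * a.
Variables (r : nat) (a : 'I_r -> A).
Local Notation e := (eA A).

Definition monomial (t : seq 'I_r) : A := \prod_(i <- t) a i.

Definition monomial_gens p : seq A :=
  [seq monomial (tval t) * tnth e k | t <- enum {: p.-tuple 'I_r}, k <- enum 'I_(dimA A)].

(* the p-th power of the ideal generated by the a l *)
Definition mon_ideal p : {vspace A} := <<monomial_gens p>>%VS.

Lemma monomial_mul_mem p (t : p.-tuple 'I_r) c : monomial t * c \in mon_ideal p.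
Proof.
rewrite (expand_eA c) mulr_sumr; apply: memv_suml => k _; rewrite -scalerAr memvZ //.
by apply/memv_span/(allpairs_f (fun t k => monomial (tval t) * tnth e k)); rewrite mem_enum.
Qed.

Lemma mon_ideal0 x : x \in mon_ideal 0.
Proof. by have := monomial_mul_mem [tuple] x; rewrite /monomial big_nil mul1r. Qed.

Lemma mon_idealS p : (mon_ideal p.+1 <= mon_ideal p)%VS.
Proof.
apply/span_subvP => _ /allpairsP [[[[|i t] //= sz_t] k] [_ _ ->]].
by rewrite /monomial big_cons (mulAC (a i)) -mulrA (monomial_mul_mem (Tuple sz_t)).
Qed.

Lemma mon_ideal_mull p l x : x \in mon_ideal p -> a l * x \in mon_ideal p.+1.
Proof.
have : (amull (a l) @: mon_ideal p <= mon_ideal p.+1)%VS.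
  rewrite limg_span; apply/span_subvP => _ /mapP [_ /allpairsP [[t k] [_ _ ->]] ->].
  have := monomial_mul_mem [tuple of l :: t] (tnth e k).
  by rewrite lfunE /= mulrA /monomial big_cons.
by move/subvP => Hsub xI; have := Hsub _ (memv_img (amull (a l)) xI); rewrite lfunE.
Qed.

Lemma monomial_count l (t : seq 'I_r) :
  monomial t = a l ^+ count_mem l t * monomial [seq i <- t | i != l].
Proof.
elim: t => [|i t IH]; first by rewrite /monomial big_nil mul1r.
rewrite /monomial /= big_cons -/(monomial t) IH; case: eqVneq => [->|neq_il] /=.
  by rewrite add1n exprS mulrA.
by rewrite big_cons -/(monomial _) mulrA (mulAC (a i)) -mulrA.
Qed.

Lemma mon_ideal_nilpotent q : (forall l, a l ^+ q = 0) -> mon_ideal (r * q).+1 = 0%VS.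
Proof.
move=> aq; apply/eqP; rewrite -subv0; apply/span_subvP => _ /allpairsP [[t k] [_ _ ->]].
have [|l ql] := @count_mem_pigeonhole _ t q; first by rewrite card_ord size_tuple.
by rewrite memv0 (monomial_count l) -(subnKC ql) exprD aq !mul0r.
Qed.
End MonomialIdeal.

Section TensorFiltration.
Variables (K : fieldType) (L : dgla K) (Mo : dgmod L) (A : falgType K).
Hypothesis mulAC : forall a b : A, a * b = b * a.
Variables (r : nat) (w : 'I_r -> dg_C L 1) (a : 'I_r -> A).
Variable omega : tens A (dg_C L 1).
Hypothesis omegaE : omega = \sum_l tmul (w l) (a l).
Local Notation M := (md_M Mo).
Local Notation D := (twisted_d omega).
Local Notation I := (mon_ideal a).

(* M (x) I^p, where I is the ideal generated by the coefficients a l of omega *)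
Definition tens_filt p n (x : tens A (M n)) : Prop :=
  exists s : seq (M n * A), all (fun vb => vb.2 \in I p) s /\
    x = \sum_(vb <- s) tmul vb.1 vb.2.
Arguments tens_filt : clear implicits.

Lemma tens_filt_subspace p n : is_subspace (tens_filt p n).
Proof.
split; first by exists [::]; rewrite big_nil.
move=> c _ _ [s [Is ->]] [s' [Is' ->]].
exists ([seq (c *: vb.1, vb.2) | vb <- s] ++ s'); split.
  by rewrite all_cat Is' andbT all_map.
rewrite big_cat big_map /= scaler_sumr; congr (_ + _).
by apply: eq_bigr => vb _; rewrite tmulZl.
Qed.

Lemma tens_filt_tmul p n (v : M n) b : b \in I p -> tens_filt p n (tmul v b).
Proof. by move=> Ib; exists [:: (v, b)]; rewrite /= Ib big_seq1. Qed.

Lemma tens_filt_decr p n x : tens_filt p.+1 n x -> tens_filt p n x.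
Proof.
move=> [s [Is ->]]; exists s; split=> //; apply: sub_all Is => vb.
exact: (subvP (mon_idealS mulAC a p)).
Qed.

Lemma tens_filt_all n (x : tens A (M n)) : tens_filt 0 n x.
Proof.
exists [seq (x i, tnth (eA A) i) | i <- index_enum 'I_(dimA A)]; split.
  by apply/allP => vb /mapP [i _ ->]; apply: mon_ideal0.
by rewrite big_map -tens_expand.
Qed.

Lemma tens_filt_last P : I P = 0%VS -> forall n x, tens_filt P n x -> x = 0.
Proof.
move=> IP n x [s [Is ->]]; rewrite big_seq big1 // => vb vbs.
by move/allP: Is => /(_ _ vbs); rewrite IP memv0 => /eqP ->; rewrite linear0.
Qed.

(* D - d_M (x) 1 is the action of omega, whose coefficients lie in I *)
Lemma tens_filt_twist p n (x : tens A (M n)) :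
  tens_filt p n x -> tens_filt p.+1 n.+1 (D x - tlin (@md_d _ L Mo n) x).
Proof.
move=> [s [Is ->]]; rewrite !linear_sum /= -big_split big_seq.
apply: (subspace_sum (tens_filt_subspace _ _)) => vb /(allP Is) Ib /=.
rewrite (twisted_d_tmul omegaE) tlin_tmul /= addrAC subrr add0r.
apply: (subspace_sum (tens_filt_subspace _ _)) => l _.
exact/tens_filt_tmul/mon_ideal_mull.
Qed.

Section GradedPiece.
Variable p : nat.
Local Notation W := (I p :\: I p.+1)%VS.
Local Notation gb := (vbasis W).
Local Notation pi := (addv_pi1 (I p) (I p.+1)).

(* W is a complement of I^(p+1) in I^p; gr_coord are the coordinates of I^p / I^(p+1) *)
Definition gr_coord (h : 'I_(\dim W)) : {scalar A} := coord gb h \o pi.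

Lemma gr_coord_next h b : b \in I p.+1 -> gr_coord h b = 0.
Proof.
move=> bI; have bUV : b \in (I p + I p.+1)%VS by rewrite -[b]add0r memv_add ?mem0v.
have := addv_pi1_pi2 bUV; rewrite addv_pi2_id // => /(congr1 (fun y => y - b)).
by rewrite addrK subrr /gr_coord /= => ->; rewrite linear0.
Qed.

Lemma gr_basis_mem (h : 'I_(\dim W)) : gb`_h \in I p.
Proof.
by apply: (subvP (diffvSl _ (I p.+1))); apply: vbasis_mem; rewrite mem_nth // size_tuple.
Qed.

Lemma gr_expand b : b \in I p -> b - \sum_h gr_coord h b *: gb`_h \in I p.+1.
Proof.
move=> bI; have bUV : b \in (I p + I p.+1)%VS by rewrite -[b]addr0 memv_add ?mem0v.
rewrite -(coord_vbasis (memv_pi _ _ b)) -{1}(addv_pi1_pi2 bUV) addrC addKr.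
exact: memv_pi2.
Qed.

Local Notation gr_part h x := (tcontract (gr_coord h) x).

Lemma tens_filt_gr_expand n x : tens_filt p n x ->
  tens_filt p.+1 n (x - \sum_h tmul (gr_part h x) gb`_h).
Proof.
move=> [s [Is ->]].
have -> : \sum_h tmul (gr_part h (\sum_(vb <- s) tmul vb.1 vb.2)) gb`_h =
          \sum_(vb <- s) tmul vb.1 (\sum_h gr_coord h vb.2 *: gb`_h).
  under eq_bigr => h _ do rewrite linear_sum /= tmul_suml.
  rewrite exchange_big /=; apply: eq_bigr => vb _; rewrite linear_sum /=.
  by apply: eq_bigr => h _; rewrite tcontract_tmul tmulZl linearZ.
rewrite -sumrB big_seq; apply: (subspace_sum (tens_filt_subspace _ _)) => vb /(allP Is) Ib.
by rewrite -linearB; apply/tens_filt_tmul/gr_expand.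
Qed.

Lemma gr_part_next n (y : tens A (M n)) h : tens_filt p.+1 n y -> gr_part h y = 0.
Proof.
move=> [s [Is ->]]; rewrite linear_sum big_seq big1 // => vb /(allP Is) Ib /=.
by rewrite tcontract_tmul gr_coord_next ?scale0r.
Qed.

Lemma gr_part_cocycle n (x : tens A (M n)) h :
  tens_filt p n x -> tens_filt p.+1 n.+1 (D x) -> md_d (gr_part h x) = 0.
Proof.
move=> Fx FDx; rewrite -tcontract_tlin -(subKr (D x) (tlin _ x)) linearB /=.
by rewrite (gr_part_next h FDx) (gr_part_next h (tens_filt_twist Fx)) subrr.
Qed.

Lemma gr_cobound_lift j (x : tens A (M j)) rM (z : 'I_rM -> M j)
    (c : 'I_(\dim W) -> 'I_rM -> K) :
  tens_filt p j x ->
  (forall h, is_cobound (@md_d _ L Mo) (gr_part h x - \sum_k c h k *: z k)) ->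
  exists y, filt_cobound (@twisted_d _ A L Mo omega) tens_filt p y /\
    tens_filt p.+1 j (x - \sum_h tmul (\sum_k c h k *: z k) gb`_h - y).
Proof.
case: j x z => [|j] x z Fx cob; have FxG := tens_filt_gr_expand Fx.
  exists 0; split=> //; rewrite subr0; congr (tens_filt _ _ (x - _)): FxG.
  by apply: eq_bigr => h _; move/eqP: (cob h); rewrite subr_eq0 => /eqP ->.
have [y dy] := fin_all_exists cob; pose Y := \sum_h tmul (y h) gb`_h.
have FY : tens_filt p j Y.
  by apply: (subspace_sum (tens_filt_subspace _ _)) => h _; apply/tens_filt_tmul/gr_basis_mem.
exists (D Y); split; first by exists Y.
have dY : tlin (@md_d _ L Mo j) Y = \sum_h tmul (gr_part h x) gb`_h
                                    - \sum_h tmul (\sum_k c h k *: z k) gb`_h.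
  rewrite linear_sum /= -sumrB; apply: eq_bigr => h _.
  by rewrite tlin_tmul /= dy tmulDl tmulNl.
set G := \sum_h _ in FxG dY; set t := \sum_h _ in dY *.
have -> : x - t - D Y = (x - G) - (D Y - tlin (@md_d _ L Mo j) Y).
  by rewrite dY opprB addrA subrKA.
exact: subspaceB (tens_filt_subspace _ _) _ _ FxG (tens_filt_twist FY).
Qed.

Hypothesis M_cohom_fg :
  forall j, cohom_fg (@md_d _ L Mo) (fun n (c : K) (x : M n) => c *: x) j.

Lemma tens_gr_cohom_fg j : exists zs : seq (tens A (M j)),
  forall x, tens_filt p j x -> tens_filt p.+1 j.+1 (D x) ->
  exists t y, [/\ in_span zs t, filt_cobound (@twisted_d _ A L Mo omega) tens_filt p y
                & tens_filt p.+1 j (x - t - y)].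
Proof.
have [rM [z [_ fgM]]] := M_cohom_fg j.
exists [seq tmul (z k) gb`_h | h : 'I_(\dim W) <- enum 'I_(\dim W), k <- enum 'I_rM].
move=> x Fx FDx.
have [c cob] := fin_all_exists (fun h => fgM _ (gr_part_cocycle h Fx FDx)).
have [y [By Fy]] := gr_cobound_lift Fx cob.
exists (\sum_h tmul (\sum_k c h k *: z k) gb`_h), y; split=> //.
apply: (subspace_sum (in_span_subspace _)) => h _; rewrite tmul_suml.
apply: (subspace_sum (in_span_subspace _)) => k _; rewrite tmulZl.
apply/(subspaceZ (in_span_subspace _))/in_span_mem.
by apply: (allpairs_f (fun (h : 'I_(\dim W)) k => tmul (z k) gb`_h)); rewrite mem_enum.
Qed.
End GradedPiece.
End TensorFiltration.

Theorem lemma3p10 (R : realType) (L : dgla R[i]) (Mo : dgmod L)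
  (A : falgType R[i]) (m : pred A) (omega : tens A (dg_C L 1)) :
  (exists N : nat, forall j, (N < j)%N -> forall x : md_M Mo j, x = 0) ->
  (forall j, cohom_fg (@md_d _ L Mo) (fun n (c : R[i]) (x : md_M Mo n) => c *: x) j) ->
  (forall a b : A, a * b = b * a) ->
  local_with_max m ->
  in_tens_sub m omega ->
  tlin (@dg_d _ L 1) omega
    + (2%:R)^-1 *: tbil (@dg_br _ L 1 1) omega omega = 0 ->
  forall j, cohom_fg (@twisted_d _ A L Mo omega)
              (fun n (a : A) (x : tens A (md_M Mo n)) => tact a x) j.
Proof.
(* M need not be bounded: the filtration by powers of I is finite anyway. *)
move=> _ M_fg mulAC m_local [r [w [a [am omegaE]]]] MC j.
have two_neq0 : (2%:R : R[i]) != 0 by rewrite pnatr_eq0.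
have [q aq] := maxideal_nilpotent_common mulAC m_local am.
have [xs [cocyc fg]] := filt_cohom_fg0 (F := fun p n x => tens_filt a p x)
  (@twisted_d_is_linear _ _ Mo _ omega) (twisted_dK mulAC two_neq0 MC)
  (tens_filt_subspace Mo a) (@tens_filt_decr _ _ Mo _ mulAC _ a)
  (tens_filt_last (mon_ideal_nilpotent mulAC aq))
  (fun p j _ => tens_gr_cohom_fg omegaE p M_fg j) j.
exists (size xs), (fun k => xs`_k); split=> [k|x Dx].
  by have [] := cocyc _ (mem_nth 0 (ltn_ord k)).
have [t [St Bxt]] := fg x (tens_filt_all a x) Dx.
have [c ct] := in_spanP St.
exists (fun k => (c k)%:A); under eq_bigr => k _ do rewrite tact_scalar.
by rewrite -ct; apply: filt_cobound_cobound Bxt.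
Qed.
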